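(* Let $R$ be a semistandard cylindric tableau and $S$ a set of boxes satisfying the input conditions of full multi-insertion, and perform $\operatorname{FullMulti}(R,S)$. Then for every row $r$, the list of entries inserted into row $r$ during the one-step phases (placed into a box of row $r$, whether by landing or by bumping), in the order in which they were inserted, is weakly increasing.
   Context: Fix integers $n>k\ge1$. A cylindric partition is a weakly decreasing integer sequence $(\lambda_m)_{m\in\mathbb Z}$ with $\lambda_m=\lambda_{m+k}+n-k$. A point $(x,y)\in\mathbb Z^2$ lies in $\lambda$ if $y\le\lambda_x$. Boxes are classes of points modulo translation by multiples of $(-k,n-k)$; row $x$ of the cylinder is the image of plane row $x$ (indexed mod $k$), column $y$ the image of plane column $y$; within a row boxes are ordered left to right by $y$-coordinates of representatives in a fixed plane row. $\mu\subseteq\lambda$ means $\mu_m\le\lambda_m$ for all $m$. A (semistandard cylindric) tableau of shape $\lambda/\mu$ is a map from the boxes in $\lambda$ but not $\mu$ to a totally ordered alphabet, weakly increasing along plane rows and strictly increasing down plane columns; its shapes are part of its data. Full multi-insertion $\operatorname{FullMulti}(R,S)$: input a tableau $R$ with outer shape $\lambda$, inner shape $\mu$, and a set $S$ of boxes not in $\mu$, no two in the same column, such that $\mu$ plus $S$ is a cylindric partition. Choose an integer $r_0$. For $h=r_0,\dots,r_0+k-1$, go through the boxes of $S$ in row $h$ from left to right: if the box is in $\lambda$, remove its entry $x$ and append $(x,h+1)$ to a queue; otherwise add the box to $\lambda$. All boxes of $S$ are added to the inner shape. Then, while the current queue $q$ is nonempty: start an empty queue $q'$; remove pairs $(x,s)$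 from the front of $q$ one at a time; if $x$ is $\ge$ every entry in row $s$, put $x$ into the leftmost box of row $s$ not in the current outer shape and add it to the outer shape (a landing); otherwise replace the leftmost entry $x'$ of row $s$ greater than $x$ by $x$ (a bump) and append $(x',s+1)$ to $q'$; when $q$ is exhausted set $q:=q'$. All actions are performed one at a time, giving a time order. *)

From HB Require Import structures.
From mathcomp Require Import all_boot all_order all_algebra.
Set Implicit Arguments. Unset Strict Implicit. Unset Printing Implicit Defensive.
Import Order.TTheory GRing.Theory Num.Theory.
Local Open Scope ring_scope.

(* A point (x,y) lies in a partition lam : int -> int iff y <= lam x.
   Boxes = classes of points modulo translation by multiples of (-k, n-k);
   each box has a unique canonical representative (r, y) with 0 <= r < k,
   computed by [canon]. *)

Definition canon (n k : nat) (x y : int) : int * int :=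
  ((x %% k%:Z)%Z, y + (x %/ k%:Z)%Z * (n%:Z - k%:Z)).

Definition isBox (k : nat) (b : int * int) : Prop := 0 <= b.1 < k%:Z.

Definition cylindric (n k : nat) (lam : int -> int) : Prop :=
  (forall m, lam (m + 1) <= lam m) /\
  (forall m, lam m = lam (m + k%:Z) + (n%:Z - k%:Z)).

Definition subpart (mu lam : int -> int) : Prop := forall m, mu m <= lam m.

Definition inSkew (lam mu : int -> int) (b : int * int) : Prop :=
  mu b.1 < b.2 <= lam b.1.

Definition sameColumn (n k : nat) (b1 b2 : int * int) : Prop :=
  exists x1 x2 y : int, canon n k x1 y = b1 /\ canon n k x2 y = b2.

Definition semistandard (n k : nat) d (T : orderType d)
  (lam mu : int -> int) (f : int -> int -> T) : Prop :=
  let ent x y := f (canon n k x y).1 (canon n k x y).2 in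
  let inP x y := mu x < y <= lam x in
  (forall x y, inP x y -> inP x (y + 1) -> (ent x y <= ent x (y + 1))%O) /\
  (forall x y, inP x y -> inP (x + 1) y -> (ent x y < ent (x + 1) y)%O).

Definition rowys (lam mu : int -> int) (r : int) : seq int :=
  if mu r < lam r then [seq mu r + (i.+1)%:Z | i <- iota 0 `|lam r - mu r|%N]
  else [::].

Record fmstate d (T : orderType d) := FMState {
  st_lam : int -> int;
  st_mu : int -> int;
  st_f : int -> int -> T;         (* entries on canonical reps *)
  st_q : seq (T * int);
  st_q2 : seq (T * int);
  st_log : seq (int * T)          (* (row mod k, entry) of every insertion, in time order *)
}.

Definition updf d (T : orderType d) (f : int -> int -> T) (r y : int) (x : T) :=
  fun a b => if (a == r) && (b == y) then x else f a b.

Definition addrow (k : nat) (lam : int -> int) (r : int) : int -> int :=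
  fun m => if (m %% k%:Z)%Z == r then lam m + 1 else lam m.

(* One action of the while loop (or the queue switch q := q'). *)
Definition fmstep (k : nat) d (T : orderType d) (s : fmstate T) : fmstate T :=
  let: FMState lam mu f q q2 lg := s in
  match q with
  | [::] => match q2 with
            | [::] => s
            | _ => FMState lam mu f q2 [::] lg
            end
  | (x, sr) :: q1 =>
      let r := (sr %% k%:Z)%Z in
      let ys := rowys lam mu r in
      if all (fun y => (f r y <= x)%O) ys then
        FMState (addrow k lam r) mu (updf f r (lam r + 1) x) q1 q2
                (rcons lg (r, x))
      else
        let y0 := nth 0 ys (find (fun y => (x < f r y)%O) ys) in
        FMState lam mu (updf f r y0 x) q1 (rcons q2 (f r y0, sr + 1))
                (rcons lg (r, x))
  end.

(* Initial phase of FullMulti(R,S) with S = nu/mu, started at row r0. *)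
Definition fminit (k : nat) d (T : orderType d) (lam mu nu : int -> int)
  (f : int -> int -> T) (r0 : int) : fmstate T :=
  let hs := [seq r0 + i%:Z | i <- iota 0 k] in
  let q := flatten [seq [seq (f (h %% k%:Z)%Z y, h + 1)
                        | y <- rowys (fun m => Num.min (lam m) (nu m)) mu (h %% k%:Z)%Z]
                   | h <- hs] in
  FMState (fun m => Num.max (lam m) (nu m)) nu f q [::] [::].

Definition insertedRow (k : nat) d (T : orderType d) (lam mu nu : int -> int)
  (f : int -> int -> T) (r0 : int) (N : nat) (r : int) : seq T :=
  [seq p.2 | p <- st_log (iter N (@fmstep k d T) (@fminit k d T lam mu nu f r0))
           & p.1 == (r %% k%:Z)%Z].

From HB Require Import structures.
From mathcomp Require Import all_boot all_order all_algebra.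
From mathcomp Require Import zify.
Import Order.TTheory GRing.Theory Num.Theory.
Local Open Scope ring_scope.

(* Call the stream of a row the entries inserted into it so far followed by
   the entries still queued for it, in processing order; we show that every
   stream stays weakly increasing.  Each row t has a split position P: every
   entry at or left of P is at most some entry already inserted into t, and
   every entry right of P is at least everything in the stream of row t + 1.
   An entry x arriving in row t is at least everything inserted there before,
   so it bumps strictly right of P, and the bumped entry, appended to the
   stream of row t + 1, dominates that whole stream. *)

Lemma modz_bound {k : nat} : (0 < k)%N -> forall a : int, 0 <= (a %% k%:Z)%Z < k%:Z.
Proof. by move=> k_gt0 a; rewrite modz_ge0 ?ltz_pmod //; lia. Qed.

Lemma modzS_inj (k : nat) (a b : int) :
  ((a + 1) %% k%:Z)%Z = ((b + 1) %% k%:Z)%Z -> (a %% k%:Z)%Z = (b %% k%:Z)%Z.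
Proof. by move=> eq_ab; apply/eqP; rewrite -(eqz_modDr 1) eq_ab. Qed.

Lemma mem_rowys (lam mu : int -> int) r y :
  (y \in rowys lam mu r) = (mu r < y <= lam r).
Proof.
rewrite /rowys; case: ifP => [lt_mu_lam|]; last by rewrite in_nil; lia.
apply/mapP/idP => [[i + ->]|hy]; first by rewrite mem_iota; lia.
by exists `|(y - mu r - 1)%R|%N; rewrite ?mem_iota; lia.
Qed.

Lemma nth_rowys (lam mu : int -> int) r i :
  (i < size (rowys lam mu r))%N -> nth 0 (rowys lam mu r) i = mu r + i.+1%:Z.
Proof.
rewrite /rowys; case: ifP => // _.
by rewrite size_map size_iota => hi; rewrite (nth_map 0%N) ?size_iota // nth_iota.
Qed.

Lemma pairwise_rowys (lam mu : int -> int) r (R : rel int) :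
  (forall y y', mu r < y -> y < y' -> y' <= lam r -> R y y') ->
  pairwise R (rowys lam mu r).
Proof.
move=> hR; have rowys_lt : pairwise <%R (rowys lam mu r).
  rewrite /rowys; case: ifP => // _; rewrite pairwise_map.
  have := iota_ltn_sorted 0 `|lam r - mu r|%N.
  rewrite sorted_pairwise; last exact: ltn_trans.
  by apply: sub_pairwise => i j /= lt_ij; lia.
apply: (sub_in_pairwise (P := mem (rowys lam mu r))) rowys_lt; last exact/allP.
move=> y y' y_in y'_in; move: y_in y'_in.
by rewrite !mem_rowys => /andP[mu_y _] /andP[_ y'_lam] lt_yy'; apply: hR.
Qed.

Lemma bump_position {d} {T : orderType d} {lam mu : int -> int} {r : int}
    {g : int -> T} {x : T} :
  let ys := rowys lam mu r in
  let y0 := nth 0 ys (find (fun y => (x < g y)%O) ys) in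
  ~~ all (fun y => (g y <= x)%O) ys ->
  [/\ mu r < y0 <= lam r, (x < g y0)%O & forall y, mu r < y < y0 -> (g y <= x)%O].
Proof.
move=> ys y0 not_all.
have has_gt : has (fun y => (x < g y)%O) ys.
  by have /allPn[y y_in] := not_all; rewrite -ltNge => gt_y; apply/hasP; exists y.
have lt_find : (find (fun y => (x < g y)%O) ys < size ys)%N by rewrite -has_find.
have y0_row : mu r < y0 <= lam r by rewrite -mem_rowys mem_nth.
split => // [|y hy]; first exact: (nth_find 0 has_gt).
have y_in : y \in ys by rewrite mem_rowys; lia.
have lt_idx : (index y ys < find (fun y => (x < g y)%O) ys)%N.
  have := nth_index 0 y_in; rewrite nth_rowys ?index_mem //.
  move: hy; rewrite /y0 nth_rowys //.
  by move: (index y ys) (find _ ys) => i j; lia.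
by have := before_find 0 lt_idx; rewrite nth_index // => /negbT; rewrite -leNgt.
Qed.

Lemma bumped_row_le {d} {T : orderType d} (g : int -> T) (lo hi y0 : int) (x : T) :
  lo < y0 <= hi -> (x < g y0)%O -> (forall y, lo < y < y0 -> (g y <= x)%O) ->
  (forall y y', lo < y -> y <= y' -> y' <= hi -> (g y <= g y')%O) ->
  forall y y', lo < y -> y <= y' -> y' <= hi ->
  ((if y == y0 then x else g y) <= (if y' == y0 then x else g y'))%O.
Proof.
move=> y0_row x_lt_y0 left_le row_le y y' lo_y le_yy' y'_hi.
case: (eqVneq y y0) => [ey | ne_y]; case: (eqVneq y' y0) => [ey' | ne_y'] //.
- by apply: le_trans (ltW x_lt_y0) _; apply: row_le; rewrite -?ey; lia.
- by apply: left_le; rewrite lo_y lt_neqAle ne_y -ey' le_yy'.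
- exact: row_le.
Qed.

Lemma semistandard_row_le {n k d} {T : orderType d} {lam mu : int -> int}
    {f : int -> int -> T} :
  semistandard n k lam mu f -> forall t, 0 <= t < k%:Z ->
  forall y y', mu t < y -> y <= y' -> y' <= lam t -> (f t y <= f t y')%O.
Proof.
move=> [row_le _] t t_row y y' mu_y le_yy'.
have canon_t z : canon n k t z = (t, z).
  by rewrite /canon modz_small // divz_small // mul0r addr0.
have -> : y' = y + `|(y' - y)%R|%N%:Z by lia.
elim: `|(y' - y)%R|%N => [|m IHm] y_lam; first by rewrite addr0.
apply: le_trans (IHm ltac:(lia)) _.
have := row_le t (y + m%:Z); rewrite !canon_t /= -addrA (addrC _ 1) -intS; apply; lia.
Qed.

Lemma pairwise_flatten_if (A : eqType) (B : Type) (R : rel B) (g : pred A)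
    (F : A -> seq B) (hs : seq A) :
  uniq hs -> {in hs &, forall h h', g h -> g h' -> h = h'} ->
  {in hs, forall h, g h -> pairwise R (F h)} ->
  pairwise R (flatten [seq if g h then F h else [::] | h <- hs]).
Proof.
elim: hs => //= h hs IHhs /andP[h_notin uniq_hs] g_inj R_F.
case: ifP => g_h; last first.
  apply: IHhs => // [h1 h2 h1_in h2_in | h1 h1_in].
    by apply: g_inj; rewrite inE ?h1_in ?h2_in orbT.
  by apply: R_F; rewrite inE h1_in orbT.
have others : all (predC g) hs.
  apply/allP => h' h'_in /=; apply: contra h_notin => g_h'.
  by rewrite (g_inj h h') ?inE ?eqxx ?h'_in ?orbT.
have -> : flatten [seq if g h' then F h' else [::] | h' <- hs] = [::].
  elim: hs others {IHhs h_notin uniq_hs g_inj R_F} => //= h' hs IHhs.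
  by case/andP=> /negbTE -> /IHhs.
by rewrite cats0; apply: R_F; rewrite ?inE ?eqxx.
Qed.

Section FullMultiInsertion.

Local Set Implicit Arguments.

Variables (k : nat) (d : Order.disp_t) (T : orderType d).
Hypothesis k_gt0 : (0 < k)%N.

Local Notation rowof a := (a %% k%:Z)%Z.

Definition queued (q : seq (T * int)) (t : int) : seq T :=
  [seq p.1 | p <- q & rowof p.2 == t].

Definition logged (lg : seq (int * T)) (t : int) : seq T :=
  [seq p.2 | p <- lg & p.1 == t].

Definition row_stream (s : fmstate T) (t : int) : seq T :=
  logged (st_log s) t ++ queued (st_q s ++ st_q2 s) t.

Definition row_sorted (s : fmstate T) (t : int) : Prop :=
  forall y y', st_mu s t < y -> y <= y' -> y' <= st_lam s t ->
  (st_f s t y <= st_f s t y')%O.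

Definition row_split (s : fmstate T) (t P : int) : Prop :=
  (forall y, st_mu s t < y <= P ->
     exists2 v, v \in logged (st_log s) t & (st_f s t y <= v)%O) /\
  (forall y, P < y <= st_lam s t ->
     forall v, v \in row_stream s (rowof (t + 1)) -> (v <= st_f s t y)%O).

Definition fm_invariant (s : fmstate T) : Prop :=
  forall t, 0 <= t < k%:Z ->
  [/\ pairwise <=%O (row_stream s t), row_sorted s t & exists P, row_split s t P].

Lemma queued_cat q q' t : queued (q ++ q') t = queued q t ++ queued q' t.
Proof. by rewrite /queued filter_cat map_cat. Qed.

Lemma queued_cons x c q t :
  queued ((x, c) :: q) t = if rowof c == t then x :: queued q t else queued q t.
Proof. by rewrite /queued /=; case: ifP. Qed.

Lemma logged_rcons lg r x t :
  logged (rcons lg (r, x)) t = logged lg t ++ (if r == t then [:: x] else [::]).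
Proof.
by rewrite /logged filter_rcons; case: ifP => _; rewrite ?map_rcons ?cats1 ?cats0.
Qed.

Lemma mem_logged_rcons lg p v t : v \in logged lg t -> v \in logged (rcons lg p) t.
Proof. by case: p => r x; rewrite logged_rcons mem_cat => ->. Qed.

Lemma row_stream_pop lam mu f lam' mu' f' x c q q2 lg t :
  row_stream (FMState lam' mu' f' q q2 (rcons lg (rowof c, x))) t =
  row_stream (FMState lam mu f ((x, c) :: q) q2 lg) t.
Proof.
rewrite /row_stream /= logged_rcons queued_cons.
by case: (_ == t); rewrite ?cats0 // -catA.
Qed.

Lemma row_stream_push lam mu f q q2 lg u c t :
  row_stream (FMState lam mu f q (rcons q2 (u, c)) lg) t =
  row_stream (FMState lam mu f q q2 lg) t ++ (if rowof c == t then [:: u] else [::]).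
Proof.
rewrite /row_stream /= -cats1 catA queued_cat catA; congr (_ ++ _).
by rewrite /queued /=; case: ifP.
Qed.

Lemma logged_le_head {lam mu f x c q q2 lg} :
  fm_invariant (FMState lam mu f ((x, c) :: q) q2 lg) ->
  forall v, v \in logged lg (rowof c) -> (v <= x)%O.
Proof.
move=> inv v v_in; have [+ _ _] := inv _ (modz_bound k_gt0 c).
rewrite /row_stream /= queued_cons eqxx pairwise_cat => /and3P[/allrelP le_log _ _].
by apply: le_log; rewrite ?mem_head.
Qed.

Lemma addrow_small lam r t :
  0 <= t < k%:Z -> addrow k lam r t = if t == r then lam t + 1 else lam t.
Proof. by move=> t_row; rewrite /addrow modz_small. Qed.

Lemma fm_invariant_land lam mu f x c q q2 lg (r := rowof c) :
  fm_invariant (FMState lam mu f ((x, c) :: q) q2 lg) ->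
  all (fun y => (f r y <= x)%O) (rowys lam mu r) ->
  fm_invariant (FMState (addrow k lam r) mu (updf f r (lam r + 1) x) q q2
                        (rcons lg (r, x))).
Proof.
move=> inv all_le t t_row.
have [stream_t sorted_t [P [left_t right_t]]] := inv t t_row.
have r_row : 0 <= r < k%:Z by exact: modz_bound.
have [_ sorted_r _] := inv r r_row.
have row_r_le y : mu r < y <= lam r + 1 -> (updf f r (lam r + 1) x r y <= x)%O.
  move=> y_row; rewrite /updf eqxx /=; case: eqP => // ne_y.
  by apply: (allP all_le); rewrite mem_rowys; lia.
split; first by rewrite (row_stream_pop lam mu f).
- move=> y y' /=; rewrite addrow_small //; case: eqP => [-> | /eqP ne_tr]; last first.
    by rewrite /updf (negbTE ne_tr); apply: sorted_t.
  move=> mu_y le_yy' y'_lam; rewrite {2}/updf eqxx /=; case: eqP => [_ | /eqP ne_y'].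
    by apply: row_r_le; lia.
  rewrite /updf eqxx /= ifN; last by apply/eqP; lia.
  by apply: sorted_r; rewrite // -ltzD1 lt_neqAle ne_y'.
- case: (eqVneq t r) => [-> | ne_tr].
    exists (lam r + 1); split => y /=; last by rewrite addrow_small //= eqxx; lia.
    move=> y_row; exists x; last exact: row_r_le.
    by rewrite logged_rcons eqxx mem_cat mem_head orbT.
  exists P; split => y /=.
    rewrite /updf (negbTE ne_tr) => /left_t[v v_in le_v].
    by exists v; first exact: mem_logged_rcons.
  rewrite addrow_small // (negbTE ne_tr) /updf (negbTE ne_tr) => y_row v.
  by rewrite (row_stream_pop lam mu f); apply: right_t.
Qed.

Lemma fm_invariant_bump lam mu f x c q q2 lg (r := rowof c) (ys := rowys lam mu r)
    (y0 := nth 0 ys (find (fun y => (x < f r y)%O) ys)) :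
  fm_invariant (FMState lam mu f ((x, c) :: q) q2 lg) ->
  ~~ all (fun y => (f r y <= x)%O) ys ->
  fm_invariant (FMState lam mu (updf f r y0 x) q (rcons q2 (f r y0, c + 1))
                        (rcons lg (r, x))).
Proof.
move=> inv not_all; have [] := bump_position not_all.
rewrite -/ys -/y0 => y0_row x_lt_y0 left_le; clearbody y0.
have r_row : 0 <= r < k%:Z by exact: modz_bound.
have [_ sorted_r [Pr [left_r right_r]]] := inv r r_row.
rewrite /= in sorted_r left_r right_r.
have Pr_lt_y0 : Pr < y0.
  rewrite ltNge; apply/negP => y0_le_Pr.
  have [v v_in /le_trans/(_ (logged_le_head inv _ v_in))] := left_r y0 ltac:(lia).
  by rewrite leNgt x_lt_y0.
set s' := FMState _ _ _ _ _ _.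
have stream_eq t : row_stream s' t = row_stream (FMState lam mu f ((x, c) :: q) q2 lg) t
    ++ (if rowof (r + 1) == t then [:: f r y0] else [::]).
  by rewrite row_stream_push (row_stream_pop lam mu f) modzDml.
move=> t t_row; have [stream_t sorted_t [P [left_t right_t]]] := inv t t_row.
split.
- rewrite stream_eq; case: eqP => [rt | _]; last by rewrite cats0.
  rewrite pairwise_cat stream_t /= andbT; apply/allrelP => v w v_in.
  by rewrite mem_seq1 => /eqP ->; apply: right_r; rewrite ?rt //; lia.
- case: (eqVneq t r) => [-> | ne_tr] y y' /=; last first.
    by rewrite /updf (negbTE ne_tr); apply: sorted_t.
  by rewrite /updf eqxx /=; apply: bumped_row_le.
- case: (eqVneq t r) => [-> | ne_tr]; last first.
    exists P; split => y /=; rewrite /updf (negbTE ne_tr).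
      by move=> /left_t[v v_in le_v]; exists v; first exact: mem_logged_rcons.
    move=> y_row v; rewrite stream_eq ifN ?cats0; first exact: right_t.
    by apply: contra ne_tr => /eqP/modzS_inj; rewrite !modz_small // => ->.
  exists y0; split => y /= y_row.
    exists x; first by rewrite logged_rcons eqxx mem_cat mem_head orbT.
    by rewrite /updf eqxx /=; case: eqP => // ne_y; apply: left_le; lia.
  move=> v; rewrite /updf eqxx /= ifN; last by apply/eqP; lia.
  rewrite stream_eq eqxx mem_cat mem_seq1 => /orP[v_in | /eqP ->].
    by apply: right_r => //; lia.
  by apply: sorted_r => /=; lia.
Qed.

Lemma fm_invariant_step s : fm_invariant s -> fm_invariant (fmstep k s).
Proof.
case: s => lam mu f [|[x c] q] q2 lg inv /=.
  by case: q2 inv => [|p q2] inv // t /inv; rewrite /row_split /row_stream /= cats0.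
case: ifP => [all_le | /negbT not_all]; first exact: fm_invariant_land.
exact: fm_invariant_bump.
Qed.

Lemma fm_invariant_iter s N : fm_invariant s -> fm_invariant (iter N (@fmstep k d T) s).
Proof. by move=> inv; elim: N => //= N; apply: fm_invariant_step. Qed.

Lemma row_stream_fminit lam mu nu f r0 t :
  row_stream (@fminit k d T lam mu nu f r0) t =
  flatten [seq if rowof (h + 1) == t then
                 [seq f (rowof h) y
                 | y <- rowys (fun m => Num.min (lam m) (nu m)) mu (rowof h)]
               else [::]
          | h <- [seq r0 + i%:Z | i <- iota 0 k]].
Proof.
rewrite /row_stream /= cats0.
elim: [seq r0 + i%:Z | i <- iota 0 k] => [|h hs IHhs] /=; first by rewrite /queued.
rewrite queued_cat IHhs; congr (_ ++ _).
by elim: (rowys _ _ _) => [|y ys IHys] /=; rewrite ?queued_cons ?IHys; case: eqP.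
Qed.

Lemma fm_invariant_fminit n lam mu nu f r0 :
  subpart mu nu -> semistandard n k lam mu f ->
  fm_invariant (@fminit k d T lam mu nu f r0).
Proof.
move=> mu_nu ss t t_row; have row_le := semistandard_row_le ss.
split; rewrite ?row_stream_fminit.
- apply: pairwise_flatten_if.
  + by rewrite map_inj_uniq ?iota_uniq // => i j /addrI /eqP; rewrite eqz_nat => /eqP.
  + move=> _ _ /mapP[i + ->] /mapP[j + ->] /eqP <- /eqP /modzS_inj.
    rewrite !mem_iota => i_lt j_lt /eqP; rewrite eqz_modDl !modz_small; lia.
  + move=> h _ _; rewrite pairwise_map.
    apply: pairwise_rowys => y y' mu_y lt_yy' y'_le.
    by apply: row_le; [exact: modz_bound | | |]; move: y'_le; rewrite ?le_min; lia.
- move=> y y' /= nu_y le_yy'; rewrite le_max => /orP[y'_lam | ]; last by lia.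
  by apply: row_le => //; have := mu_nu t; lia.
- exists (nu t); split => y /=; first by lia.
  rewrite le_max row_stream_fminit => y_row v /flattenP[_ /mapP[h _ ->]].
  case: eqP => // /modzS_inj; rewrite (modz_small (m := t)) // => -> /mapP[y'' + ->].
  rewrite mem_rowys le_min => y''_row.
  by apply: row_le => //; lia.
Qed.

End FullMultiInsertion.

Theorem mainTheorem14 (n k : nat) (hk : (0 < k)%N) (hkn : (k < n)%N)
  d (T : orderType d) (lam mu nu : int -> int) (f : int -> int -> T) (r0 : int) :
  cylindric n k lam -> cylindric n k mu -> subpart mu lam ->
  semistandard n k lam mu f ->
  cylindric n k nu -> subpart mu nu ->
  (forall b1 b2, isBox k b1 -> isBox k b2 -> inSkew nu mu b1 -> inSkew nu mu b2 ->
     b1 <> b2 -> ~ sameColumn n k b1 b2) ->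
  forall (N : nat) (r : int),
    sorted (<=%O) (@insertedRow k d T lam mu nu f r0 N r).
Proof.
move=> _ _ _ ss _ mu_nu _ N r.
have inv := fm_invariant_iter hk N (fm_invariant_fminit hk r0 mu_nu ss).
have [+ _ _] := inv _ (modz_bound hk r).
by rewrite /row_stream pairwise_cat => /and3P[_ /pairwise_sorted + _].
Qed.
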